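(* Let $M$ be a matroid on a finite set $E$ with $r(M)>0$. Then $|F(M)|=r(M)$ if and only if $M$ is a unique expansion matroid.
   Context: For a matroid $M=(E,\mathcal{I})$: $\mathcal{B}(M)$ is its family of bases, $r(M)$ the common cardinality of bases, and $r(X)$ the rank of $X\subseteq E$. For $r(M)>0$: $s(M)=\{A\in\mathcal{I}(M): |A|=r(M)-1\}$; $K_M(X)=\{a\in E: r(X\cup\{a\})=r(X)+1\}$ for $X\subseteq E$; $F(M)=\{K_M(X): X\in s(M)\}$ (a set of sets, so $|F(M)|$ counts distinct sets). $M$ is a unique expansion matroid if for every $B\in\mathcal{B}(M)$ and every $A\in s(M)$, whenever $e_1,e_2\in B$ satisfy $A\cup\{e_1\}\in\mathcal{B}(M)$ and $A\cup\{e_2\}\in\mathcal{B}(M)$, then $e_1=e_2$. *)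

From mathcomp Require Import all_boot.
Set Implicit Arguments. Unset Strict Implicit. Unset Printing Implicit Defensive.

Definition is_matroid (E : finType) (I : {set {set E}}) : Prop :=
  [/\ set0 \in I,
      (forall A B : {set E}, B \in I -> A \subset B -> A \in I) &
      (forall A B : {set E}, A \in I -> B \in I -> #|A| < #|B| ->
         exists2 x, x \in B :\: A & x |: A \in I)].

Section MatroidDefs.
Variables (E : finType) (I : {set {set E}}).

Definition bases : {set {set E}} :=
  [set B in I | [forall C in I, (B \subset C) ==> (C == B)]].

Definition rk (X : {set E}) : nat := \max_(A in I | A \subset X) #|A|.

Definition mrank : nat := rk setT.

Definition sM : {set {set E}} := [set A in I | #|A| == mrank - 1].

Definition KM (X : {set E}) : {set E} := [set a | rk (a |: X) == (rk X).+1].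

Definition FM : {set {set E}} := [set KM X | X in sM].

Definition unique_expansion : Prop :=
  forall B A, B \in bases -> A \in sM ->
  forall e1 e2, e1 \in B -> e2 \in B ->
    e1 |: A \in bases -> e2 |: A \in bases -> e1 = e2.

End MatroidDefs.

From mathcomp Require Import all_boot zify.

(* For a basis B, the sets K(B - b), b in B, are pairwise distinct, since
   K(B - b) meets B exactly in b; hence |F(M)| >= r(M) always.  The exchange
   axiom shows that K(A) = K(X) whenever A, X in s(M) and X misses K(A).
   Given a basis B and A in s(M), augmenting A from B yields some b in B with
   A + b a basis; unique expansion says b is the only such element, so B - b
   misses K(A) and K(A) = K(B - b).  Thus unique expansion forces F(M) to
   consist of the r(M) sets K(B - b); conversely, if |F(M)| = r(M) then every
   K(A) is some K(B - b), which meets B in a single element. *)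

Set Implicit Arguments.
Unset Strict Implicit.
Unset Printing Implicit Defensive.

Section Matroid.

Variables (E : finType) (I : {set {set E}}).
Hypothesis matroidI : is_matroid I.

Lemma indep_subset (A B : {set E}) : B \in I -> A \subset B -> A \in I.
Proof. by case: matroidI => _ + _; apply. Qed.

Lemma indep_augment (A B : {set E}) : A \in I -> B \in I -> #|A| < #|B| ->
  exists2 x, x \in B :\: A & x |: A \in I.
Proof. by case: matroidI => _ _; apply. Qed.

Lemma rk_witness (X : {set E}) :
  exists2 C, (C \in I) && (C \subset X) & rk I X = #|C|.
Proof.
have : 0 < #|[pred C : {set E} | (C \in I) && (C \subset X)]|.
  by apply/card_gt0P; exists set0; case: matroidI => I0 _ _; rewrite inE I0 sub0set.
move/(eq_bigmax_cond (fun C : {set E} => #|C|)) => [C CP rkC].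
by exists C; rewrite // /rk -rkC; apply: eq_bigl => D; rewrite !inE.
Qed.

Lemma leq_card_rk (C X : {set E}) : C \in I -> C \subset X -> #|C| <= rk I X.
Proof.
move=> CI sCX.
by apply: (@leq_bigmax_cond _ (fun D => (D \in I) && (D \subset X))
  (fun D : {set E} => #|D|)); rewrite CI sCX.
Qed.

Lemma rk_indep (X : {set E}) : X \in I -> rk I X = #|X|.
Proof.
move=> XI; apply/eqP; rewrite eqn_leq leq_card_rk // andbT.
by case: (rk_witness X) => C /andP[_ sCX] ->; apply: subset_leq_card.
Qed.

Lemma KM_indep (X : {set E}) a :
  X \in I -> (a \in KM I X) = (a \notin X) && (a |: X \in I).
Proof.
move=> XI; rewrite inE (rk_indep XI); apply/eqP/andP => [rkaX | [aX aXI]].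
  case: (rk_witness (a |: X)) => C /andP[CI sCaX] rkC.
  have [x] := indep_augment XI CI ltac:(by rewrite -rkC rkaX).
  rewrite inE => /andP[xX xC] xXI.
  have /setU1P[xa | xX'] := subsetP sCaX x xC; last by rewrite xX' in xX.
  by rewrite -xa xX.
by rewrite rk_indep // cardsU1 aX.
Qed.

Lemma leq_card_mrank (C : {set E}) : C \in I -> #|C| <= mrank I.
Proof. by move=> CI; apply: leq_card_rk (subsetT _). Qed.

Lemma exists_indep_mrank : exists2 B, B \in I & #|B| = mrank I.
Proof. by case: (rk_witness setT) => C /andP[CI _] rkC; exists C. Qed.

Lemma basesE (B : {set E}) : (B \in bases I) = (B \in I) && (#|B| == mrank I).
Proof.
rewrite inE; apply/andP/andP => -[BI Bmax]; split=> //.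
  move/forall_inP: Bmax => Bmax; rewrite eqn_leq leq_card_mrank //=.
  case: exists_indep_mrank => C CI <-; rewrite leqNgt; apply/negP => ltBC.
  have [x] := indep_augment BI CI ltBC; rewrite inE => /andP[xB _] xBI.
  by move: (Bmax _ xBI); rewrite subsetUr /= => /eqP eB; rewrite -eB setU11 in xB.
apply/forall_inP => C CI; apply/implyP => sBC.
by rewrite eq_sym eqEcard sBC (eqP Bmax) leq_card_mrank.
Qed.

Lemma setU1_basis (A : {set E}) e : A \in I -> #|A|.+1 = mrank I ->
  (e |: A \in bases I) = (e \in KM I A).
Proof.
move=> AI cardA; rewrite basesE KM_indep // cardsU1 -cardA.
by case: (e \in A); rewrite /= ?add0n ?add1n ?eqxx ?andbT // (ltn_eqF (ltnSn _)) andbF.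
Qed.

Lemma sM_indep (A : {set E}) : 0 < mrank I -> A \in sM I ->
  A \in I /\ #|A|.+1 = mrank I.
Proof. by move=> r_gt0; rewrite inE => /andP[AI /eqP cardA]; split=> //; lia. Qed.

Section EqualCard.

Variables A X : {set E}.
Hypotheses (AI : A \in I) (XI : X \in I) (cardAX : #|A| = #|X|).

Lemma disjoint_KM_sym : [disjoint X & KM I A] -> [disjoint A & KM I X].
Proof.
move=> XKA; apply/pred0P => y /=; apply/negP => /andP[yA].
rewrite KM_indep // => /andP[yX yXI].
have [z] := indep_augment AI yXI ltac:(by rewrite cardsU1 yX cardAX).
rewrite inE => /andP[zA /setU1P[zy | zX]] zAI; first by rewrite zy yA in zA.
have zKA : z \in KM I A by rewrite KM_indep // zA.
by move/pred0P/(_ z): XKA; rewrite /= zX zKA.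
Qed.

Lemma KM_sub_disjoint : [disjoint X & KM I A] -> KM I A \subset KM I X.
Proof.
move=> XKA; have /pred0P AKX := disjoint_KM_sym XKA.
apply/subsetP => a aKA; have := aKA; rewrite KM_indep // => /andP[aA aAI].
have aX : a \notin X by apply/negP => aX; move/pred0P/(_ a): XKA; rewrite /= aX aKA.
have [y] := indep_augment XI aAI ltac:(by rewrite cardsU1 aA -cardAX).
rewrite inE => /andP[yX /setU1P[-> | yA]] yXI; first by rewrite KM_indep // aX.
by have := AKX y; rewrite /= yA KM_indep // yX yXI.
Qed.

End EqualCard.

Lemma KM_eq_disjoint (A X : {set E}) : A \in I -> X \in I -> #|A| = #|X| ->
  [disjoint X & KM I A] -> KM I A = KM I X.
Proof.
move=> AI XI cardAX XKA; apply/eqP; rewrite eqEsubset KM_sub_disjoint //=.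
by apply: KM_sub_disjoint; rewrite // disjoint_KM_sym.
Qed.

Lemma KM_setD1 (B : {set E}) b c : B \in I -> b \in B -> c \in B ->
  (c \in KM I (B :\ b)) = (c == b).
Proof.
move=> BI bB cB; rewrite KM_indep ?(indep_subset BI (subD1set _ _)) //.
by rewrite !inE cB andbT negbK; case: eqP => [-> | //]; rewrite setD1K.
Qed.

Definition base_KM (B : {set E}) : {set {set E}} := [set KM I (B :\ b) | b in B].

Lemma card_base_KM (B : {set E}) : B \in I -> #|base_KM B| = #|B|.
Proof.
move=> BI; apply: card_in_imset => b c bB cB eKbc.
have : b \in KM I (B :\ b) by rewrite KM_setD1 // eqxx.
by rewrite eKbc KM_setD1 // => /eqP.
Qed.

Lemma setD1_sM (B : {set E}) b : B \in bases I -> b \in B -> B :\ b \in sM I.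
Proof.
rewrite basesE => /andP[BI /eqP cardB] bB.
rewrite inE (indep_subset BI (subD1set _ _)) /=; apply/eqP.
by rewrite (cardsD1 b B) bB in cardB; lia.
Qed.

Lemma base_KM_sub (B : {set E}) : B \in bases I -> base_KM B \subset FM I.
Proof. by move=> Bb; apply/subsetP => _ /imsetP[b bB ->]; rewrite imset_f ?setD1_sM. Qed.

Hypothesis r_gt0 : 0 < mrank I.

Lemma unique_expansion_card_FM : #|FM I| = mrank I -> unique_expansion I.
Proof.
move=> cardF B A Bb AsM e1 e2 e1B e2B.
have [AI cardA] := sM_indep r_gt0 AsM.
have [BI cardB] : B \in I /\ #|B| = mrank I by move: Bb; rewrite basesE => /andP[-> /eqP].
rewrite !setU1_basis //.
have /eqP base_KM_FM : base_KM B == FM I.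
  by rewrite eqEcard base_KM_sub //= card_base_KM // cardF cardB.
have /imsetP[b bB ->] : KM I A \in base_KM B by rewrite base_KM_FM imset_f.
by rewrite !KM_setD1 // => /eqP -> /eqP ->.
Qed.

Lemma FM_unique_expansion : unique_expansion I ->
  forall B, B \in bases I -> FM I = base_KM B.
Proof.
move=> uniqI B Bb.
have [BI cardB] : B \in I /\ #|B| = mrank I by move: Bb; rewrite basesE => /andP[-> /eqP].
apply/eqP; rewrite eq_sym eqEsubset base_KM_sub //=.
apply/subsetP => _ /imsetP[A AsM ->].
have [AI cardA] := sM_indep r_gt0 AsM.
have [b] := indep_augment AI BI ltac:(by rewrite cardB -cardA).
rewrite inE => /andP[bA bB] bAI.
have bKA : b \in KM I A by rewrite KM_indep // bA.
rewrite (KM_eq_disjoint AI (indep_subset BI (subD1set B b))).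
- exact: imset_f.
- by move: cardB; rewrite (cardsD1 b B) bB /=; lia.
apply/pred0P => c /=; apply/negbTE/andP => -[/setD1P[cb cB] cKA].
have := uniqI B A Bb AsM c b cB bB; rewrite !setU1_basis // => /(_ cKA bKA) cbE.
by rewrite cbE eqxx in cb.
Qed.

End Matroid.

Theorem theorem5 (E : finType) (I : {set {set E}}) :
  is_matroid I -> 0 < mrank I ->
  (#|FM I| = mrank I <-> unique_expansion I).
Proof.
move=> matroidI r_gt0; split; first exact: unique_expansion_card_FM.
move=> uniqI; have [B BI cardB] := exists_indep_mrank matroidI.
have Bb : B \in bases I by rewrite basesE // BI cardB eqxx.
by rewrite (FM_unique_expansion matroidI r_gt0 uniqI Bb) card_base_KM.
Qed.
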